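(* Let $Q>1$ be real, and let $k\ge0$ and $\ell\ge1$ be integers. Define power series $$\mathcal F_1(x)=(-Qx)_k\sum_{p=1}^\infty\left[{k+p\atop k+1}\right]\frac{(-x)^p}{Q^{\ell+p}-1},\qquad \mathcal F_2(x)=\left[{k\atop\ell}\right](1+x)^{-1}-\sum_{s=0}^{k-\ell}Q^{\binom{s+1}{2}+\ell s}\left[{k\atop \ell+s}\right]x^s.$$ Then $$\mathcal F_2(x)=-\frac{(Q)_{k+1}}{(Q)_\ell\,(Q)_{k-\ell}}\,\mathcal F_1(x).$$
   Context: Here $Q=q_{\mathbf{n}_{m-1}}=q^{n_0\cdots n_{m-1}}$ in the paper, but only $Q>1$ matters. Notation: $(x)_0=1$ and $(x)_n=(1-x)(1-Qx)\cdots(1-Q^{n-1}x)$ for $n\ge1$, so $(Q)_n=\prod_{j=1}^n(1-Q^j)$ and $(-Qx)_k=\prod_{j=1}^k(1+Q^jx)$; the $Q$-binomial coefficient is $\left[{k\atop r}\right]=\frac{(Q)_k}{(Q)_r(Q)_{k-r}}$ for $0\le r\le k$, with the conventions $\left[{k\atop r}\right]=0$ unless $0\le r\le k$, $1/(Q)_j=0$ for $j<0$, and an empty sum equal to $0$. *)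

From mathcomp Require Import all_boot all_order all_algebra.
Set Implicit Arguments. Unset Strict Implicit. Unset Printing Implicit Defensive.
Import Order.TTheory GRing.Theory Num.Theory.
Local Open Scope ring_scope.

(* Formal power series in x over R are represented by their coefficient
   sequences nat -> R. *)

Definition qpoch {R : realFieldType} (Q : R) (n : nat) : R :=
  \prod_(1 <= j < n.+1) (1 - Q ^+ j).

Definition qbinom {R : realFieldType} (Q : R) (k r : nat) : R :=
  if (r <= k)%N then qpoch Q k / (qpoch Q r * qpoch Q (k - r)) else 0.

Definition negQpoch {R : realFieldType} (Q : R) (k : nat) : {poly R} :=
  \prod_(1 <= j < k.+1) (1 + Q ^+ j *: 'X).

Definition cauchy {R : realFieldType} (a b : nat -> R) (n : nat) : R :=
  \sum_(i < n.+1) a i * b (n - i)%N.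

Definition F1sum {R : realFieldType} (Q : R) (k l : nat) (p : nat) : R :=
  if p == 0%N then 0
  else qbinom Q (k + p) k.+1 * (-1) ^+ p / (Q ^+ (l + p) - 1).

Definition F1 {R : realFieldType} (Q : R) (k l : nat) : nat -> R :=
  cauchy (fun i => (negQpoch Q k)`_i) (F1sum Q k l).

Definition F2 {R : realFieldType} (Q : R) (k l : nat) (n : nat) : R :=
  qbinom Q k l * (-1) ^+ n
  - (if (l <= k)%N && (n <= k - l)%N
     then Q ^+ ('C(n.+1, 2) + l * n) * qbinom Q k (l + n)
     else 0).

(* (Q)_{k+1} / ((Q)_l (Q)_{k-l}), with 1/(Q)_j = 0 for j < 0 *)
Definition Fconst {R : realFieldType} (Q : R) (k l : nat) : R :=
  if (l <= k)%N then qpoch Q k.+1 / (qpoch Q l * qpoch Q (k - l)) else 0.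

(* Write k = l + d and read both sides as coefficient sequences X_k.  Both
   satisfy the recurrence [qstep] in k,
     (1 - Q^(d+1)) X_(k+1)(n) = (1 - Q^(k+1+n)) X_k(n) + Q^(k+1) (1 - Q^n) X_k(n-1),
   and both equal the coefficients of -x/(1+x) when k = l.  For F2 the recurrence
   is a combination of the two q-Pascal rules.  For F1 it follows from the closed
   form -Fconst * F1sum_p = [k+p, l+p] (-1)^p [l+p-1, l], whose factor [k+p, l+p]
   obeys a one-step absorption rule, and from (-Qx)_(k+1)(x) = ((1+y)(-Qy)_k)|_(y=Qx). *)

From mathcomp Require Import all_boot all_order all_algebra.
From mathcomp Require Import ring zify.
Import Order.TTheory GRing.Theory Num.Theory.
Local Open Scope ring_scope.

Section CauchyProduct.
Context {R : realFieldType}.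
Implicit Types (a b : nat -> R) (c : R).

Definition shiftX a n : R := if n is n'.+1 then a n' else 0.

Definition mul1X c a n : R := a n + c * shiftX a n.

Lemma eq_cauchy a b b' : b =1 b' -> cauchy a b =1 cauchy a b'.
Proof. by move=> eq_b n; apply: eq_bigr => i _; rewrite eq_b. Qed.

Lemma cauchyZr c a b n : c * cauchy a b n = cauchy a (fun p => c * b p) n.
Proof. by rewrite mulr_sumr; apply: eq_bigr => i _; rewrite mulrCA. Qed.

Lemma cauchy_mul1Xl c a b n : cauchy (mul1X c a) b n = mul1X c (cauchy a b) n.
Proof.
rewrite /cauchy /mul1X; under eq_bigr do rewrite mulrDl.
rewrite big_split; congr (_ + _); case: n => [|n] /=.
  by rewrite big_ord1 mulr0 mul0r.
rewrite big_ord_recl mulr0 mul0r add0r mulr_sumr.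
by apply: eq_bigr => i _; rewrite mulrA.
Qed.

Lemma cauchy_mul1Xr c a b n : cauchy a (mul1X c b) n = mul1X c (cauchy a b) n.
Proof.
rewrite /cauchy /mul1X; under eq_bigr do rewrite mulrDr.
rewrite big_split; congr (_ + _); case: n => [|n] /=.
  by rewrite big_ord1 !mulr0.
rewrite big_ord_recr subnn /= !mulr0 addr0 mulr_sumr.
by apply: eq_bigr => i _; rewrite (subSn (leq_ord i)) /= mulrCA.
Qed.

Lemma coef_mul1X c (p : {poly R}) i :
  (p * (1 + c *: 'X))`_i = mul1X c (fun j => p`_j) i.
Proof. by rewrite mulrDr mulr1 -scalerAr coefD coefZ coefMX; case: i. Qed.

End CauchyProduct.

Section QSeries.
Context {R : realFieldType} {Q : R}.
Hypothesis Q_gt1 : 1 < Q.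
Implicit Types (b : nat -> R).

Lemma qpoch0 : qpoch Q 0 = 1.
Proof. by rewrite /qpoch big_geq. Qed.

Lemma qpochS n : qpoch Q n.+1 = qpoch Q n * (1 - Q ^+ n.+1).
Proof. by rewrite /qpoch big_nat_recr. Qed.

Lemma qfactor_neq0 n : 1 - Q ^+ n.+1 != 0.
Proof. by rewrite subr_eq0 eq_sym gt_eqF // exprn_egt1. Qed.

Lemma qpoch_neq0 n : qpoch Q n != 0.
Proof.
by elim: n => [|n IHn]; rewrite ?qpoch0 ?oner_neq0 // qpochS mulf_neq0 ?qfactor_neq0.
Qed.

Lemma qbinom_small n j : (n < j)%N -> qbinom Q n j = 0.
Proof. by rewrite /qbinom ltnNge => /negbTE ->. Qed.

Lemma qbinom_addn j m : qbinom Q (j + m) j = qpoch Q (j + m) / (qpoch Q j * qpoch Q m).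
Proof. by rewrite /qbinom leq_addr addKn. Qed.

Lemma qbinomE n j : (j <= n)%N -> qbinom Q n j = qpoch Q n / (qpoch Q j * qpoch Q (n - j)).
Proof. by rewrite /qbinom => ->. Qed.

Lemma qbinomnn n : qbinom Q n n = 1.
Proof.
by have := qbinom_addn n 0; rewrite addn0 qpoch0 mulr1 divff ?qpoch_neq0.
Qed.

Lemma qbinom0 n : qbinom Q n 0 = 1.
Proof. by rewrite -[n]add0n qbinom_addn qpoch0 mul1r divff ?qpoch_neq0. Qed.

Lemma qbinomS n j : qbinom Q n.+1 j.+1 = qbinom Q n j + Q ^+ j.+1 * qbinom Q n j.+1.
Proof.
case: (ltngtP n j) => [lt_nj | lt_jn | ->]; last by rewrite !qbinomnn qbinom_small ?mulr0 ?addr0.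
  by rewrite !qbinom_small ?mulr0 ?addr0 // ltnW.
have [m ->] : exists m, n = (j + m.+1)%N by exists (n - j.+1)%N; lia.
rewrite !qbinomE ?subSS ?addKn; try lia.
rewrite (_ : j + m.+1 - j.+1 = m)%N; last by lia.
rewrite addnS !qpochS.
have -> : Q ^+ (j + m).+2 = Q ^+ j.+1 * Q ^+ m.+1 by rewrite -exprD addSn addnS.
by field; rewrite !qpoch_neq0 !qfactor_neq0.
Qed.

Lemma qbinomS_dual n j :
  Q ^+ j.+1 * qbinom Q n.+1 j.+1 = Q ^+ j.+1 * qbinom Q n j.+1 + Q ^+ n.+1 * qbinom Q n j.
Proof.
case: (ltngtP n j) => [lt_nj | lt_jn | ->]; last by rewrite !qbinomnn qbinom_small ?mulr0 ?add0r.
  by rewrite !qbinom_small ?mulr0 ?addr0 // ltnW.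
have [m ->] : exists m, n = (j + m.+1)%N by exists (n - j.+1)%N; lia.
rewrite !qbinomE ?subSS ?addKn; try lia.
rewrite (_ : j + m.+1 - j.+1 = m)%N; last by lia.
rewrite addnS !qpochS.
have -> : Q ^+ (j + m).+2 = Q ^+ j.+1 * Q ^+ m.+1 by rewrite -exprD addSn addnS.
by field; rewrite !qpoch_neq0 !qfactor_neq0.
Qed.

Lemma qbinom_absorb L d :
  (1 - Q ^+ d.+1) * qbinom Q (L + d).+1 L = (1 - Q ^+ (L + d).+1) * qbinom Q (L + d) L.
Proof.
rewrite -addnS !qbinom_addn addnS !qpochS.
by field; rewrite !qpoch_neq0 !qfactor_neq0.
Qed.

Lemma qbinom_three_term l d m :
  (1 - Q ^+ d.+1) * (Q ^+ (l + m).+1 * qbinom Q (l + d).+1 (l + m).+1) =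
  Q ^+ (l + m).+1 * qbinom Q (l + d) (l + m).+1 * (1 - Q ^+ ((l + d).+1 + m.+1))
  + Q ^+ (l + d).+1 * (1 - Q ^+ m.+1) * qbinom Q (l + d) (l + m).
Proof.
rewrite mulrBl mul1r {1}qbinomS_dual qbinomS.
have -> : Q ^+ (l + d).+1 = Q ^+ l * Q ^+ d.+1 by rewrite -exprD addnS.
have -> : Q ^+ (l + m).+1 = Q ^+ l * Q ^+ m.+1 by rewrite -exprD addnS.
have -> : Q ^+ ((l + d).+1 + m.+1) = Q ^+ l * Q ^+ d.+1 * Q ^+ m.+1.
  by rewrite -!exprD; congr (_ ^+ _); lia.
ring.
Qed.

Definition qstep k (X : nat -> R) n : R :=
  X n * (1 - Q ^+ (k.+1 + n)) + Q ^+ k.+1 * (1 - Q ^+ n) * shiftX X n.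

Lemma eq_qstep k {X Y : nat -> R} : X =1 Y -> qstep k X =1 qstep k Y.
Proof. by move=> eqXY [|n]; rewrite /qstep /= !eqXY. Qed.

Definition F2poly k l n := Q ^+ ('C(n.+1, 2) + l * n) * qbinom Q k (l + n).

Lemma F2E k l n : (l <= k)%N -> F2 Q k l n = qbinom Q k l * (-1) ^+ n - F2poly k l n.
Proof.
move=> le_lk; rewrite /F2 /F2poly le_lk /=; case: leqP => // lt_kln.
by rewrite [qbinom Q k (l + n)]qbinom_small ?mulr0 ?subr0 //; lia.
Qed.

Lemma F2nn l n : F2 Q l l n = (-1) ^+ n - (n == 0)%:R.
Proof.
rewrite F2E // /F2poly qbinomnn mul1r; case: n => [|n].
  by rewrite addn0 qbinomnn muln0 bin_small // expr0 mulr1.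
by rewrite qbinom_small ?mulr0 // -addSnnS leq_addr.
Qed.

Lemma F2poly_step l d n :
  (1 - Q ^+ d.+1) * F2poly (l + d).+1 l n = qstep (l + d) (F2poly (l + d) l) n.
Proof.
rewrite /qstep /F2poly; case: n => [|m] /=.
  by rewrite !muln0 !addn0 !mul1r qbinom_absorb mulr0 addr0 mulrC.
have -> : Q ^+ ('C(m.+2, 2) + l * m.+1) = Q ^+ ('C(m.+1, 2) + l * m) * Q ^+ (l + m).+1.
  by rewrite -exprD binS bin1; congr (_ ^+ _); lia.
by rewrite addnS -mulrA mulrCA qbinom_three_term; ring.
Qed.

Lemma F2_step l d n :
  (1 - Q ^+ d.+1) * F2 Q (l + d).+1 l n = qstep (l + d) (F2 Q (l + d) l) n.
Proof.
have le_l_ld : (l <= l + d)%N by rewrite leq_addr.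
rewrite F2E ?leqW // mulrBr mulrA qbinom_absorb F2poly_step /qstep exprD.
by case: n => [|n] /=; rewrite !F2E // ?[(-1) ^+ _.+1]exprS; ring.
Qed.

Definition negQpoch_mul k (b : nat -> R) := cauchy (fun i => (negQpoch Q k)`_i) b.

Lemma negQpoch0 : negQpoch Q 0 = 1.
Proof. by rewrite /negQpoch big_geq. Qed.

Lemma negQpochS k : negQpoch Q k.+1 = negQpoch Q k * (1 + Q ^+ k.+1 *: 'X).
Proof. by rewrite /negQpoch big_nat_recr. Qed.

Lemma negQpoch_mulS k b n : negQpoch_mul k.+1 b n = mul1X (Q ^+ k.+1) (negQpoch_mul k b) n.
Proof.
by rewrite /negQpoch_mul -cauchy_mul1Xl; apply: eq_bigr => i _; rewrite negQpochS coef_mul1X.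
Qed.

Lemma coef_negQpochS k i :
  (negQpoch Q k.+1)`_i = Q ^+ i * mul1X 1 (fun j => (negQpoch Q k)`_j) i.
Proof.
elim: k i => [|k IHk] i.
  rewrite negQpochS negQpoch0 coef_mul1X /mul1X.
  by case: i => [|[|i]] /=; rewrite !coef1 /= ?expr0 ?expr1; ring.
rewrite [negQpoch Q k.+2]negQpochS coef_mul1X /mul1X.
case: i => [|i] /=; first by rewrite expr0 !mulr0 !addr0 mul1r.
rewrite [in LHS]IHk [in LHS](IHk i) negQpochS !coef_mul1X /mul1X.
by case: i => [|i] /=; rewrite !exprS; ring.
Qed.

Lemma negQpoch_mul_step k b n :
  negQpoch_mul k.+1 (fun p => b p * (1 - Q ^+ (k.+1 + p))) n = qstep k (negQpoch_mul k b) n.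
Proof.
have -> : negQpoch_mul k.+1 (fun p => b p * (1 - Q ^+ (k.+1 + p))) n =
    negQpoch_mul k.+1 b n
    - Q ^+ (k.+1 + n) * cauchy (mul1X 1 (fun j => (negQpoch Q k)`_j)) b n.
  rewrite /negQpoch_mul /cauchy mulr_sumr -sumrB; apply: eq_bigr => i _.
  have -> : Q ^+ (k.+1 + n) = Q ^+ (k.+1 + (n - i)) * Q ^+ i.
    by rewrite -exprD -addnA subnK // -ltnS.
  by rewrite coef_negQpochS; ring.
by rewrite negQpoch_mulS cauchy_mul1Xl -/(negQpoch_mul k b) /qstep /mul1X exprD; ring.
Qed.

(* Coefficients of -x / ((1 + x) (-Qx)_l). *)
Definition qrecip l p : R := if p is p'.+1 then (-1) ^+ p * qbinom Q (l + p') l else 0.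

Lemma qrecipS l : qrecip l =1 mul1X (Q ^+ l.+1) (qrecip l.+1).
Proof.
rewrite /mul1X => -[|[|p]] /=; first by rewrite mulr0 addr0.
  by rewrite !addn0 !qbinomnn mulr0 addr0.
by rewrite -addSnnS addnS qbinomS !exprS; ring.
Qed.

Lemma negQpoch_mul_qrecip l n : negQpoch_mul l (qrecip l) n = (-1) ^+ n - (n == 0)%:R.
Proof.
elim: l n => [|l IHl] n.
  rewrite /negQpoch_mul /cauchy negQpoch0 big_ord_recl big1 => [|i _]; last first.
    by rewrite coef1 mul0r.
  rewrite coef1 mul1r addr0 subn0; case: n => [|n] /=; first by rewrite subrr.
  by rewrite qbinom0 mulr1 subr0.
rewrite negQpoch_mulS -cauchy_mul1Xr -IHl.
by apply: eq_cauchy => p; rewrite qrecipS.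
Qed.

Lemma Fconst_F1sumE l d p :
  - Fconst Q (l + d) l * F1sum Q (l + d) l p = qbinom Q (l + d + p) (l + p) * qrecip l p.
Proof.
rewrite /Fconst /F1sum leq_addr addKn; case: p => [|p] /=; first by rewrite !mulr0.
rewrite !qbinomE; try lia.
rewrite (_ : l + d + p.+1 - (l + d).+1 = p)%N; last by lia.
rewrite (_ : l + d + p.+1 - (l + p.+1) = d)%N; last by lia.
rewrite addKn !addnS !qpochS.
have nz_den : Q ^+ (l + p).+1 - 1 != 0 by rewrite -oppr_eq0 opprB qfactor_neq0.
by field; rewrite nz_den !qpoch_neq0 !qfactor_neq0.
Qed.

Lemma F2_negQpoch_mul l d :
  F2 Q (l + d) l =1 negQpoch_mul (l + d) (fun p => qbinom Q (l + d + p) (l + p) * qrecip l p).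
Proof.
elim: d => [|d IHd] n.
  rewrite addn0 F2nn -(negQpoch_mul_qrecip l).
  by apply: eq_cauchy => p; rewrite qbinomnn mul1r.
apply: (mulfI (qfactor_neq0 d)).
rewrite addnS F2_step (eq_qstep _ IHd) -negQpoch_mul_step cauchyZr.
apply: eq_cauchy => p.
by rewrite addSn addnAC mulrA qbinom_absorb; ring.
Qed.

End QSeries.

Theorem lemma3p6 (R : realFieldType) (Q : R) (k l : nat) :
  1 < Q -> (1 <= l)%N ->
  forall n : nat, F2 Q k l n = - Fconst Q k l * F1 Q k l n.
Proof.
move=> Q_gt1 _ n.
have [lt_kl | /subnKC <-] := ltnP k l.
  by rewrite /F2 /Fconst qbinom_small // leqNgt lt_kl /= mul0r subr0 oppr0 mul0r.
rewrite (F2_negQpoch_mul Q_gt1) /F1 cauchyZr.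
by apply: eq_cauchy => p; rewrite (Fconst_F1sumE Q_gt1).
Qed.
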